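(* Let $m,n\ge1$ and let $A\in\{0,1\}^{m\times n}$ have exactly three ones in each row. Each of the following four subsets of $\mathrm{NPadj}(A)$ is the vertex set of a face of $\operatorname{conv}(\mathrm{NPadj}(A))$, and its convex hull is affinely equivalent to $\operatorname{conv}(\mathrm{Part}(A))$: - $F_1=\{x\in\mathrm{NPadj}(A): y_1=0,y_2=1,y_3=1\}$; - $F_2=\{x\in\mathrm{NPadj}(A): y_1=1,y_2=0,y_3=1\}$; - $F_3=\{x\in\mathrm{NPadj}(A): y_1=0,y_2=1,y_3=0\}$; - $F_4=\{x\in\mathrm{NPadj}(A): y_1=1,y_2=0,y_3=0\}$. In particular, $\mathrm{Part}(A)\le_a\mathrm{NPadj}(A)$.
   Context: **Definition of $\mathrm{NPadj}(A)$.** Let $m,n\ge1$ and let $A\in\{0,1\}^{m\times n}$ have exactly three ones in each row. Index the coordinates of $\mathbb{R}^{3n+3}$ by $y_1,y_2,y_3$ and by $x_j,\bar x_j,x'_j$ for $j\in[n]=\{1,\dots,n\}$. Then $\mathrm{NPadj}(A)$ is the set of vectors in $\{0,1\}^{3n+3}$ satisfying: - $x_j+\bar x_j=1$ for all $j\in[n]$; - $y_1+y_2+x'_j+\bar x_j=2$ for all $j\in[n]$; - for each row of $A$, with ones in columns $i<j<k$, the equation $y_3+x_i+x'_j+x'_k=2$. **Partition polytope.** $\mathrm{Part}(A)=\{z\in\{0,1\}^n: Az=\mathbf 1\}$. **Affine reduction of polytopes.** For finite sets $P,Q$ of 0/1 vectors, $P\le_a Q$ means: there is an affine map $\alpha$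 on $\operatorname{conv}(P)$, injective there, such that $\alpha(\operatorname{conv}(P))$ is a face (possibly improper) of $\operatorname{conv}(Q)$. *)

From HB Require Import structures.
From mathcomp Require Import all_boot all_order all_algebra.
Set Implicit Arguments. Unset Strict Implicit. Unset Printing Implicit Defensive.
Import Order.TTheory GRing.Theory Num.Theory.

Section Poly.
Variable R : realFieldType.
Local Open Scope ring_scope.

Definition emb (T : finType) (v : {ffun T -> bool}) : {ffun T -> R} :=
  [ffun t => (v t)%:R].

Definition conv (T : finType) (P : {set {ffun T -> bool}}) (x : {ffun T -> R}) : Prop :=
  exists lam : {ffun {ffun T -> bool} -> R},
    (forall v, 0 <= lam v) /\ (forall v, v \notin P -> lam v = 0) /\
    \sum_v lam v = 1 /\ (forall t, x t = \sum_v lam v * emb v t).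

Definition dotp (T : finType) (c x : {ffun T -> R}) : R := \sum_t c t * x t.

(* G is a face (possibly improper, possibly empty) of C:
   G = C ∩ {c.x = d} for a valid inequality c.x <= d of C. *)
Definition is_face (T : finType) (C G : {ffun T -> R} -> Prop) : Prop :=
  exists (c : {ffun T -> R}) (d : R),
    (forall x, C x -> dotp c x <= d) /\
    (forall x, G x <-> (C x /\ dotp c x = d)).

Definition affmap (T T' : finType) (M : T' -> T -> R) (b : T' -> R)
  (x : {ffun T -> R}) : {ffun T' -> R} :=
  [ffun t' => b t' + \sum_t M t' t * x t].

Definition inj_on (T T' : finType) (f : {ffun T -> R} -> {ffun T' -> R})
  (C : {ffun T -> R} -> Prop) : Prop :=
  forall x y, C x -> C y -> f x = f y -> x = y.

Definition image_of (T T' : finType) (f : {ffun T -> R} -> {ffun T' -> R})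
  (C : {ffun T -> R} -> Prop) (z : {ffun T' -> R}) : Prop :=
  exists2 x, C x & z = f x.

Definition aff_equiv (T T' : finType) (C : {ffun T -> R} -> Prop)
  (D : {ffun T' -> R} -> Prop) : Prop :=
  exists (M : T' -> T -> R) (b : T' -> R),
    inj_on (affmap M b) C /\ (forall z, D z <-> image_of (affmap M b) C z).

Definition le_a (T T' : finType) (P : {set {ffun T -> bool}})
  (Q : {set {ffun T' -> bool}}) : Prop :=
  exists (M : T' -> T -> R) (b : T' -> R),
    inj_on (affmap M b) (conv P) /\
    is_face (conv Q) (image_of (affmap M b) (conv P)).
End Poly.

(* Coordinates of R^{3n+3}: y_1,y_2,y_3 (inl k, k : 'I_3), and for j : 'I_n
   x_j, xbar_j, x'_j. *)
Definition coord (n : nat) : finType := ('I_3 + ('I_n + ('I_n + 'I_n)))%type.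
Definition cy {n} (k : 'I_3) : coord n := inl k.
Definition cx {n} (j : 'I_n) : coord n := inr (inl j).
Definition cxb {n} (j : 'I_n) : coord n := inr (inr (inl j)).
Definition cxp {n} (j : 'I_n) : coord n := inr (inr (inr j)).
Definition y1 {n} : coord n := cy (@Ordinal 3 0 isT).
Definition y2 {n} : coord n := cy (@Ordinal 3 1 isT).
Definition y3 {n} : coord n := cy (@Ordinal 3 2 isT).

Definition NPadj (m n : nat) (A : 'M[bool]_(m, n)) : {set {ffun coord n -> bool}} :=
  [set v : {ffun coord n -> bool} |
    [&& [forall j : 'I_n, v (cx j) + v (cxb j) == 1]%N,
        [forall j : 'I_n, v y1 + v y2 + v (cxp j) + v (cxb j) == 2]%N &
        [forall r : 'I_m, forall i : 'I_n, forall j : 'I_n, forall k : 'I_n,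
           [&& (i < j)%N, (j < k)%N, A r i, A r j & A r k] ==>
           (v y3 + v (cx i) + v (cxp j) + v (cxp k) == 2)%N]]].

Definition Part (m n : nat) (A : 'M[bool]_(m, n)) : {set {ffun 'I_n -> bool}} :=
  [set z : {ffun 'I_n -> bool} |
    [forall r : 'I_m, \sum_(j < n) (A r j : nat) * (z j : nat) == 1]%N].

Definition Fsub (m n : nat) (A : 'M[bool]_(m, n)) (a b c : bool) :
  {set {ffun coord n -> bool}} :=
  [set v in NPadj A | [&& v y1 == a, v y2 == b & v y3 == c]].

Arguments conv R {T} P x.
Arguments le_a R {T T'} P Q.

From Pilot Require Import Defs.
From HB Require Import structures.
From mathcomp Require Import all_boot all_order all_algebra zify lra.
Set Implicit Arguments. Unset Strict Implicit. Unset Printing Implicit Defensive.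
Import Order.TTheory GRing.Theory Num.Theory.

(* Fixing some coordinates of a 0/1 polytope to a 0/1 pattern cuts out a face:
   the linear functional that sums the fixed coordinates with sign + where the
   pattern is 1 and - where it is 0 is at most the number of ones of the pattern
   at every 0/1 point, with equality exactly at the points agreeing with it.
   When y1 + y2 = 1, the equations of NPadj(A) force xbar = 1 - x and x' = x,
   and the equation of a row with support i < j < k becomes
   y3 + x_i + x_j + x_k = 2.  So z := x (if y3 = 1) or z := 1 - x (if y3 = 0)
   is an exact cover, i.e. a point of Part(A), and conversely.  This bijection
   of vertices is the restriction of an injective affine map, which therefore
   carries conv(Part(A)) onto conv(F). *)

Section ConvexHulls.
Variables (R : realFieldType) (T : finType).
Local Open Scope ring_scope.
Implicit Types (P Q F : {set {ffun T -> bool}}) (v : {ffun T -> bool})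
  (lam : {ffun {ffun T -> bool} -> R}).

Definition is_weight P lam :=
  (forall v, 0 <= lam v) /\ (forall v, v \notin P -> lam v = 0) /\ \sum_v lam v = 1.

Definition barycenter lam : {ffun T -> R} := [ffun t => \sum_v lam v * emb R v t].

Lemma convP P x : conv R P x <-> exists2 lam, is_weight P lam & x = barycenter lam.
Proof.
split=> [[lam [l0 [lP [l1 xE]]]] | [lam [l0 [lP l1]] ->]].
  by exists lam => //; apply/ffunP => t; rewrite ffunE xE.
by exists lam; do 3!split => //; move=> t; rewrite ffunE.
Qed.

Lemma is_weight_subset P Q lam : P \subset Q -> is_weight P lam -> is_weight Q lam.
Proof.
move=> /subsetP PQ [l0 [lP l1]]; split=> //; split=> // v vQ.
by apply: lP; apply: contra vQ; apply: PQ.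
Qed.

Lemma dotp_barycenter (c : {ffun T -> R}) lam :
  dotp c (barycenter lam) = \sum_v lam v * dotp c (emb R v).
Proof.
rewrite /dotp; under [RHS]eq_bigr => v _ do rewrite big_distrr /=.
rewrite exchange_big /=; apply: eq_bigr => t _.
by rewrite ffunE big_distrr /=; apply: eq_bigr => v _; rewrite mulrCA.
Qed.

Lemma face_of_valid_inequality P F (c : {ffun T -> R}) (d : R) :
  F \subset P -> {in P, forall v, dotp c (emb R v) <= d} ->
  {in P, forall v, (dotp c (emb R v) == d) = (v \in F)} ->
  is_face (conv R P) (conv R F).
Proof.
move=> FP valid tight; exists c, d; split.
  move=> _ /convP[lam [l0 [lP l1]] ->]; rewrite dotp_barycenter.
  rewrite -[leRHS]mul1r -l1 big_distrl /=; apply: ler_sum => v _.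
  have [vP|vP] := boolP (v \in P); first by rewrite ler_wpM2l ?valid.
  by rewrite lP ?mul0r.
move=> x; split.
  case/convP=> lam lw ->; split.
    by apply/convP; exists lam => //; apply: is_weight_subset lw.
  have [_ [lF l1]] := lw.
  rewrite dotp_barycenter -[RHS]mul1r -l1 big_distrl /=; apply: eq_bigr => v _.
  have [vF|vF] := boolP (v \in F); last by rewrite lF ?mul0r.
  by move: (tight v (subsetP FP v vF)); rewrite vF => /eqP ->.
case=> /convP[lam [l0 [lP l1]] ->] dx; apply/convP; exists lam => //.
split=> //; split=> // v vF.
have slack_ge0 u : 0 <= lam u * (d - dotp c (emb R u)).
  have [uP|uP] := boolP (u \in P); last by rewrite lP ?mul0r.
  by rewrite mulr_ge0 ?subr_ge0 ?valid.
have slack0 : \sum_u lam u * (d - dotp c (emb R u)) = 0.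
  under eq_bigr do rewrite mulrBr.
  by rewrite sumrB -big_distrl /= l1 mul1r -dotp_barycenter dx subrr.
have /eqP := psumr_eq0P (fun u _ => slack_ge0 u) slack0 (i := v) isT.
rewrite mulf_eq0 subr_eq0 => /orP[/eqP // | /eqP dv].
have [vP|vP] := boolP (v \in P); last by rewrite lP.
by move: (tight v vP); rewrite -dv eqxx (negbTE vF).
Qed.

Definition pattern_dir (S : {set T}) (p : T -> bool) : {ffun T -> R} :=
  [ffun t => if t \in S then (if p t then 1 else -1) else 0].

Lemma dotp_pattern_dir (S : {set T}) (p : T -> bool) v :
  dotp (pattern_dir S p) (emb R v) =
  \sum_(t in S) (p t : nat)%:R - \sum_(t in S) (v t != p t : nat)%:R.
Proof.
rewrite -sumrB /dotp [RHS]big_mkcond /=; apply: eq_bigr => t _; rewrite !ffunE.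
by case: (t \in S); case: (p t); case: (v t); rewrite /= ?mul0r //; lra.
Qed.

Lemma pattern_face Q (S : {set T}) (p : T -> bool) :
  is_face (conv R Q) (conv R [set v in Q | [forall t in S, v t == p t]]).
Proof.
apply: (face_of_valid_inequality (c := pattern_dir S p)
                                 (d := \sum_(t in S) (p t : nat)%:R)).
- by apply/subsetP => v; rewrite inE => /andP[].
- by move=> v _; rewrite dotp_pattern_dir lerBlDr lerDl sumr_ge0.
move=> v vQ; rewrite dotp_pattern_dir inE vQ /=.
rewrite -subr_eq0 addrAC subrr sub0r oppr_eq0 -natr_sum pnatr_eq0 sum_nat_eq0.
by apply: eq_forallb => t; rewrite eqb0 negbK.
Qed.

End ConvexHulls.

Section Pushforward.
Variables (R : realFieldType) (T T' : finType).
Local Open Scope ring_scope.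
Implicit Types (P : {set {ffun T -> bool}}) (Q : {set {ffun T' -> bool}})
  (lam : {ffun {ffun T -> bool} -> R}).

Definition push (g : {ffun T -> bool} -> {ffun T' -> bool}) lam :
    {ffun {ffun T' -> bool} -> R} :=
  [ffun w => \sum_(v | g v == w) lam v].

Lemma sum_push g lam (F : {ffun T' -> bool} -> R) :
  \sum_w push g lam w * F w = \sum_v lam v * F (g v).
Proof.
rewrite [RHS](partition_big g xpredT) //=; apply: eq_bigr => w _.
by rewrite ffunE big_distrl /=; apply: eq_bigr => v /eqP ->.
Qed.

Lemma is_weight_push P Q g lam :
  {homo g : v / v \in P >-> v \in Q} -> is_weight P lam -> is_weight Q (push g lam).
Proof.
move=> gPQ [l0 [lP l1]]; split; first by move=> w; rewrite ffunE sumr_ge0.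
split=> [w wQ | ].
  rewrite ffunE big1 // => v /eqP gv; apply: lP; apply: contra wQ.
  by rewrite -gv; apply: gPQ.
have := sum_push g lam (fun _ => 1); under eq_bigr do rewrite mulr1.
by move=> ->; under eq_bigr do rewrite mulr1.
Qed.

End Pushforward.

Section AffineImages.
Variables (R : realFieldType) (T T' : finType).
Local Open Scope ring_scope.
Implicit Types (P : {set {ffun T -> bool}}) (Q : {set {ffun T' -> bool}})
  (lam : {ffun {ffun T -> bool} -> R}) (M : T' -> T -> R) (b : T' -> R).

Lemma affmap_barycenter M b lam : \sum_v lam v = 1 ->
  affmap M b (barycenter lam) = [ffun t' => \sum_v lam v * affmap M b (emb R v) t'].
Proof.
move=> l1; apply/ffunP => t'; rewrite !ffunE.
under [RHS]eq_bigr => v _ do rewrite ffunE mulrDr.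
rewrite big_split /= -big_distrl /= l1 mul1r; congr (_ + _).
under [RHS]eq_bigr => v _ do rewrite big_distrr /=.
rewrite exchange_big /=; apply: eq_bigr => t _.
by rewrite ffunE big_distrr /=; apply: eq_bigr => v _; rewrite mulrCA.
Qed.

Lemma affmap_barycenter_push M b g lam :
  (forall v, affmap M b (emb R v) = emb R (g v)) -> \sum_v lam v = 1 ->
  affmap M b (barycenter lam) = barycenter (push g lam).
Proof.
move=> gE l1; rewrite affmap_barycenter //; apply/ffunP => t'.
by rewrite !ffunE sum_push; apply: eq_bigr => v _; rewrite gE.
Qed.

Lemma aff_equiv_of_vertex_bijection P Q M b g h :
  injective (affmap M b) -> (forall v, affmap M b (emb R v) = emb R (g v)) ->
  {homo g : v / v \in P >-> v \in Q} -> {homo h : w / w \in Q >-> w \in P} ->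
  {in Q, cancel h g} ->
  aff_equiv (conv R P) (conv R Q).
Proof.
move=> inj gE gPQ hQP hK; exists M, b; split; first by move=> x y _ _; apply: inj.
move=> z; split.
  case/convP=> mu muw ->; have [_ [muQ mu1]] := muw.
  have hw : is_weight P (push h mu) by apply: is_weight_push hQP muw.
  rewrite /image_of; exists (barycenter (push h mu)).
    by apply/convP; exists (push h mu).
  have [_ [_ hmu1]] := hw; rewrite (affmap_barycenter_push gE hmu1).
  apply/ffunP => t; rewrite !ffunE sum_push (sum_push h mu (fun v => emb R (g v) t)).
  apply: eq_bigr => w _; have [wQ|wQ] := boolP (w \in Q); first by rewrite hK.
  by rewrite muQ ?mul0r.
case=> _ /convP[lam lw ->] ->; apply/convP; exists (push g lam).
  exact: is_weight_push gPQ lw.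
by have [_ [_ l1]] := lw; rewrite (affmap_barycenter_push gE l1).
Qed.

Lemma le_a_of_face P Q (F : {set {ffun T' -> bool}}) :
  aff_equiv (conv R P) (conv R F) -> is_face (conv R Q) (conv R F) -> le_a R P Q.
Proof.
move=> [M [b [inj imgE]]] [c [d [valid faceE]]]; exists M, b; split=> //.
by exists c, d; split=> // z; rewrite -imgE.
Qed.

End AffineImages.

Lemma sum_scaled_delta (R : pzSemiRingType) (T : finType) (i : T) (k : R) (F : T -> R) :
  (\sum_t k * (i == t)%:R * F t = k * F i)%R.
Proof.
rewrite (bigD1 i) //= eqxx mulr1 big1 ?addr0 // => t /negbTE ti.
by rewrite eq_sym ti mulr0 mul0r.
Qed.

Lemma card3_increasing n (S : {set 'I_n}) : #|S| = 3 ->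
  exists i j k : 'I_n, [/\ i < j, j < k & S =i pred3 i j k].
Proof.
move=> cS.
have srt : sorted (fun i j : 'I_n => i < j) (enum S).
  rewrite -deprecated_filter_index_enum.
  apply: sorted_filter; first by move=> ???; apply: ltn_trans.
  rewrite /index_enum -enumT.
  by have := iota_ltn_sorted 0 n; rewrite -val_enum_ord sorted_map.
move: cS; rewrite cardE.
case E: (enum S) srt => [|i [|j [|k [|? ?]]]] //= /and3P[ij jk _] _.
by exists i, j, k; split=> // l; rewrite -mem_enum E !inE.
Qed.

Section RowsOfWeightThree.
Variables (n : nat) (s : pred 'I_n) (i j k : 'I_n).
Hypotheses (ij : i < j) (jk : j < k) (sE : s =1 pred3 i j k).

Lemma sum_row_weight3 (F : 'I_n -> nat) : \sum_l s l * F l = F i + F j + F k.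
Proof.
have ik := ltn_trans ij jk.
rewrite (bigD1 i) // (bigD1 j) /=; last by rewrite neq_ltn ij orbT.
rewrite (bigD1 k) /=; last by rewrite !neq_ltn ik jk !orbT.
rewrite big1 => [|l /andP[/andP[li lj] lk]]; last first.
  by rewrite sE /= (negbTE li) (negbTE lj) (negbTE lk).
by rewrite !sE /= !eqxx ?orbT !mul1n addn0 !addnA.
Qed.

Lemma increasing_triple_unique (i' j' k' : 'I_n) :
  i' < j' -> j' < k' -> s i' -> s j' -> s k' -> [/\ i' = i, j' = j & k' = k].
Proof.
move=> ij' jk'; rewrite !sE /=.
by case/or3P=> /eqP ?; case/or3P=> /eqP ?; case/or3P=> /eqP ?; subst=> //; exfalso; lia.
Qed.

Lemma row_clause_weight3 (C : 'I_n -> 'I_n -> 'I_n -> bool) :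
  [forall i' : 'I_n, forall j' : 'I_n, forall k' : 'I_n,
     [&& i' < j', j' < k', s i', s j' & s k'] ==> C i' j' k'] = C i j k.
Proof.
apply/forallP/idP => [/(_ i)/forallP/(_ j)/forallP/(_ k)| Cijk i'].
  by rewrite ij jk !sE /= !eqxx ?orbT.
apply/forallP => j'; apply/forallP => k'; apply/implyP => /and5P[ij' jk' si sj sk].
by have [-> -> ->] := increasing_triple_unique ij' jk' si sj sk.
Qed.

End RowsOfWeightThree.

Definition ycoords n : {set Defs.coord n} := [set y1; y2; y3].

Definition ypattern {n} (a b c : bool) : {ffun Defs.coord n -> bool} :=
  [ffun t => if t == y1 then a else if t == y2 then b else c].

Lemma ypatternE n (a b c : bool) :
  [/\ ypattern a b c (@y1 n) = a, ypattern a b c (@y2 n) = b & ypattern a b c (@y3 n) = c].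
Proof. by rewrite !ffunE. Qed.

Lemma cy_in_ycoords n (k : 'I_3) : cy k \in ycoords n.
Proof.
by rewrite !inE; case: k => [[|[|[|k]]] Hk] //; rewrite /y1 /y2 /y3 /cy /=;
  apply/eqP; congr inl; apply: val_inj.
Qed.

Lemma Fsub_pattern m n (A : 'M[bool]_(m, n)) a b c :
  Fsub A a b c = [set v in NPadj A | [forall t in ycoords n, v t == ypattern a b c t]].
Proof.
apply/setP => v; rewrite !inE; congr (_ && _); have [p1 p2 p3] := ypatternE n a b c.
apply/and3P/forall_inP => [[/eqP v1 /eqP v2 /eqP v3] t | vp].
  by rewrite /ycoords !inE -orbA => /or3P[]/eqP->; rewrite ?p1 ?p2 ?p3 ?v1 ?v2 ?v3.
by split; [rewrite -p1 | rewrite -p2 | rewrite -p3]; apply: vp;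
  rewrite /ycoords !inE eqxx ?orbT.
Qed.

Lemma Fsub_face (R : realFieldType) m n (A : 'M[bool]_(m, n)) a b c :
  is_face (conv R (NPadj A)) (conv R (Fsub A a b c)).
Proof. by rewrite Fsub_pattern; apply: pattern_face. Qed.

Section FsubVertices.
Variables (m n : nat) (A : 'M[bool]_(m, n)) (a b c : bool).
Hypothesis ab : a != b.
Hypothesis rows3 : forall r : 'I_m, #|[set j : 'I_n | A r j]| = 3.

Definition npadj_vertex (z : {ffun 'I_n -> bool}) : {ffun Defs.coord n -> bool} :=
  [ffun t => match t with
   | inl _ => ypattern a b c t
   | inr (inl j) | inr (inr (inr j)) => z j == c
   | inr (inr (inl j)) => z j != c end].

Definition part_vertex (w : {ffun Defs.coord n -> bool}) : {ffun 'I_n -> bool} :=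
  [ffun j => w (cx j) == c].

Lemma row_support r : exists i j k : 'I_n, [/\ i < j, j < k & A r =1 pred3 i j k].
Proof.
have [i [j [k [ij jk Sr]]]] := card3_increasing (rows3 r).
by exists i, j, k; split=> // l; move: (Sr l); rewrite !inE.
Qed.

Lemma npadj_vertexE z j :
  [/\ npadj_vertex z (cx j) = (z j == c), npadj_vertex z (cxb j) = (z j != c)
    & npadj_vertex z (cxp j) = (z j == c)].
Proof. by split; rewrite ffunE. Qed.

Lemma npadj_vertex_y z k : npadj_vertex z (cy k) = ypattern a b c (@cy n k).
Proof. by rewrite ffunE. Qed.

Lemma npadj_vertex_in_Fsub z : (npadj_vertex z \in Fsub A a b c) = (z \in Part A).
Proof.
have [p1 p2 p3] := ypatternE n a b c.
rewrite Fsub_pattern !inE.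
have -> : [forall t in ycoords n, npadj_vertex z t == ypattern a b c t].
  apply/forall_inP => t; rewrite /ycoords !inE -orbA.
  by case/or3P=> /eqP->; rewrite npadj_vertex_y.
have -> : [forall j, npadj_vertex z (cx j) + npadj_vertex z (cxb j) == 1].
  by apply/forallP => j; have [-> -> _] := npadj_vertexE z j; case: (z j); case: c.
have -> : [forall j, npadj_vertex z y1 + npadj_vertex z y2 + npadj_vertex z (cxp j)
                       + npadj_vertex z (cxb j) == 2].
  apply/forallP => j; have [_ -> ->] := npadj_vertexE z j.
  rewrite !npadj_vertex_y p1 p2.
  by move: ab; case: a; case: b; case: (z j); case: c.
rewrite andbT; apply: eq_forallb => r /=; have [i [j [k [ij jk rowE]]]] := row_support r.
rewrite (row_clause_weight3 ij jk rowE) (sum_row_weight3 ij jk rowE).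
have [-> _ _] := npadj_vertexE z i; have [_ _ ->] := npadj_vertexE z j.
have [_ _ ->] := npadj_vertexE z k; rewrite npadj_vertex_y p3.
by case: c; case: (z i); case: (z j); case: (z k).
Qed.

Lemma npadj_vertexK : {in Fsub A a b c, cancel part_vertex npadj_vertex}.
Proof.
move=> w; rewrite Fsub_pattern !inE => /andP[/and3P[/forallP wx /forallP wy _]].
move=> /forall_inP wpat; have [p1 p2 _] := ypatternE n a b c.
have wyE k : w (cy k) = ypattern a b c (cy k) := eqP (wpat _ (cy_in_ycoords n k)).
have wxb j : w (cxb j) = ~~ w (cx j).
  by move: (wx j); case: (w (cx j)); case: (w (cxb j)).
have wxp j : w (cxp j) = w (cx j).
  move: (wy j) (wx j); rewrite !wyE p1 p2.
  by move: ab; case: a; case: b; case: (w (cx j)); case: (w (cxb j)); case: (w (cxp j)).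
apply/ffunP => -[k | [j | [j | j]]].
- by rewrite npadj_vertex_y wyE.
- rewrite -/(cx j); have [-> _ _] := npadj_vertexE (part_vertex w) j.
  by rewrite ffunE; case: c; case: (w (cx j)).
- rewrite -/(cxb j) wxb; have [_ -> _] := npadj_vertexE (part_vertex w) j.
  by rewrite ffunE; case: c; case: (w (cx j)).
- rewrite -/(cxp j) wxp; have [_ _ ->] := npadj_vertexE (part_vertex w) j.
  by rewrite ffunE; case: c; case: (w (cx j)).
Qed.

End FsubVertices.

Section VertexMap.
Variables (R : realFieldType) (n : nat) (a b c : bool).
Local Open Scope ring_scope.

Definition vertex_matrix (t : Defs.coord n) (j : 'I_n) : R :=
  let s : R := if c then 1 else -1 in
  match t with
  | inl _ => 0
  | inr (inl i) | inr (inr (inr i)) => s * (i == j)%:R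
  | inr (inr (inl i)) => - s * (i == j)%:R
  end.

Definition vertex_offset (t : Defs.coord n) : R :=
  match t with
  | inl _ => (ypattern a b c t : nat)%:R
  | inr (inl _) | inr (inr (inr _)) => (~~ c : nat)%:R
  | inr (inr (inl _)) => (c : nat)%:R
  end.

Lemma affmap_vertex z :
  affmap vertex_matrix vertex_offset (emb R z) = emb R (npadj_vertex a b c z).
Proof.
apply/ffunP => t; rewrite !ffunE.
under eq_bigr do rewrite ffunE.
case: t => [k | [i | [i | i]]] /=; rewrite ?sum_scaled_delta.
- by rewrite big1 => [|j _]; rewrite ?mul0r ?addr0 ?ffunE.
- by case: c; case: (z i) => /=; lra.
- by case: c; case: (z i) => /=; lra.
- by case: c; case: (z i) => /=; lra.
Qed.

Lemma affmap_vertex_inj : injective (affmap vertex_matrix vertex_offset).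
Proof.
move=> x y /ffunP xy; apply/ffunP => j; move: (xy (cx j)); rewrite !ffunE /=.
by rewrite !sum_scaled_delta => /addrI /mulfI; apply; case: c; rewrite ?oppr_eq0 oner_eq0.
Qed.

End VertexMap.

Lemma Fsub_aff_equiv (R : realFieldType) m n (A : 'M[bool]_(m, n)) (a b c : bool) :
  a != b -> (forall r : 'I_m, #|[set j : 'I_n | A r j]| = 3) ->
  aff_equiv (conv R (Part A)) (conv R (Fsub A a b c)).
Proof.
move=> ab rows3.
apply: (aff_equiv_of_vertex_bijection (@affmap_vertex_inj R n a b c) (affmap_vertex R a b c)
         (h := part_vertex c)).
- by move=> z; rewrite npadj_vertex_in_Fsub.
- by move=> w wF; rewrite -(npadj_vertex_in_Fsub c ab rows3) (npadj_vertexK ab wF).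
- exact: npadj_vertexK.
Qed.

Theorem mainTheorem3 (R : realFieldType) (m n : nat) (A : 'M[bool]_(m, n)) :
  (0 < m)%N -> (0 < n)%N ->
  (forall r : 'I_m, #|[set j : 'I_n | A r j]| = 3%N) ->
  (forall abc : bool * bool * bool,
     abc \in [:: (false, true, true); (true, false, true);
                 (false, true, false); (true, false, false)] ->
     let F := Fsub A abc.1.1 abc.1.2 abc.2 in
     is_face (conv R (NPadj A)) (conv R F) /\
     aff_equiv (conv R (Part A)) (conv R F)) /\
  le_a R (Part A) (NPadj A).
Proof.
move=> _ _ rows3.
have face_equiv a b c : a != b ->
    is_face (conv R (NPadj A)) (conv R (Fsub A a b c)) /\
    aff_equiv (conv R (Part A)) (conv R (Fsub A a b c)).
  by move=> ab; split; [apply: Fsub_face | apply: Fsub_aff_equiv].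
split.
  by move=> [[a b] c]; rewrite !inE => /or4P[] /eqP[-> -> ->]; apply: face_equiv.
have [face equiv] := face_equiv false true true isT.
exact: le_a_of_face equiv face.
Qed.
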